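(* Let $S>0$, $\zeta\in\{0,1\}$, $\phi\in(-1,1)$, and let $(u_n)_{n\in\mathbb{N}}$ be the $\phi$-market impact scenario defined below. Then there exists $R>0$ such that for all $x\in(-R,R)$ the scenario is regular ($N(x)=+\infty$ where $N(x)=\inf\{n: s_n(x)=-S\}$), the function $x\mapsto\sum_{n\ge0}u_n(x)$ is given by a power series on $(-R,R)$ (in particular it is $\mathcal{C}^\infty$ there), and $$\sum_{n=0}^{+\infty}u_n(x)=\frac{1}{1-\phi}\,x+\frac{1}{S}\,\frac{(1+\zeta)\phi}{(1-\phi)^3(1+\phi)}\,x^2+o(x^2)\quad\text{as }x\to0.$$
   Context: Fix $S>0$, $\zeta\in\{0,1\}$ and $\phi\in\mathbb{R}$. For $a,b\in\mathbb{R}$ write $a\vee b=\max(a,b)$. The $\phi$-market impact scenario starting from $x\in\mathbb{R}$ is the sequence of real-valued functions $(u_n)_{n\in\mathbb{N}}$ defined by $u_0(x)=x\vee(-S)$ and, for all $n\in\mathbb{N}$, $u_{n+1}(x)=\Big(\phi\big(1+\tfrac{s_n(x)}{S}\big)^{1+\zeta}u_n(x)\Big)\vee\big(-s_n(x)-S\big)$, where $s_n(x)=\sum_{k=0}^n u_k(x)$. *)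

From Stdlib Require Import Reals.
Open Scope R_scope.

(* us S zeta phi x n = (u_n(x), s_n(x)) for the phi-market impact scenario,
   with zeta : nat (intended to be 0 or 1). *)
Fixpoint us (S : R) (zeta : nat) (phi x : R) (n : nat) : R * R :=
  match n with
  | O => let u0 := Rmax x (- S) in (u0, u0)
  | Datatypes.S m =>
      let p := us S zeta phi x m in
      let u := fst p in
      let s := snd p in
      let u' := Rmax (phi * (1 + s / S) ^ (1 + zeta) * u) (- s - S) in
      (u', s + u')
  end.

Definition u_sc (S : R) (zeta : nat) (phi : R) (n : nat) (x : R) : R :=
  fst (us S zeta phi x n).

Definition s_sc (S : R) (zeta : nat) (phi : R) (n : nat) (x : R) : R :=
  snd (us S zeta phi x n).

Definition regular (S : R) (zeta : nat) (phi x : R) : Prop :=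
  forall n : nat, s_sc S zeta phi n x <> - S.

From Stdlib Require Import Reals Lra Lia.
From Coquelicot Require Import Coquelicot.
Open Scope R_scope.

(* Expand [u_n] and [s_n] as power series in [x] by always following the first branch of
   the max.  In the submultiplicative norm [|a|_r = sum_k |a_k| r^k], the factor
   [(1 + s_n/S)^(1+zeta)] has norm at most [(1+d)^(1+zeta)] as long as [|s_n|_r <= S d], so
   [|u_n|_r <= r q^n] with [|phi| (1+d)^(1+zeta) <= q < 1], hence [|s_n|_r <= r/(1-q)], and
   choosing [r/(1-q) <= S d] closes the induction.  For [|x| < r] this gives [|s_n(x)| <= S d < S]:
   the max never takes its second branch, the scenario is regular and [u_n(x)] is the sum of
   its series.  The coefficients of [u_n] decay like [q^n], so [sum_n u_n(x)] is the power
   series with coefficients [A_k = sum_n u_{n,k}]; the linear recursions [u_{n,1} = phi^n] and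
   [u_{n+1,2} = phi u_{n,2} + phi (1+zeta)/S s_{n,1} phi^n] give [A_1] and [A_2], and the
   geometric bound on [A_k] controls the remainder by [O(x^3)]. *)

(** * Series dominated by geometric series *)

Lemma is_series_single (a : nat -> R) :
  (forall k, a (S k) = 0) -> is_series a (a 0%nat).
Proof.
  intro Ha. apply is_series_Reals. intros eps Heps. exists 0%nat. intros n _.
  assert (Hsum : sum_f_R0 a n = a 0%nat).
  { induction n as [|n IH]; simpl; [reflexivity|]. rewrite IH, Ha. ring. }
  unfold R_dist. rewrite Hsum, Rminus_diag, Rabs_R0. exact Heps.
Qed.

Lemma Series_zero : Series (fun _ : nat => 0) = 0.
Proof. exact (is_series_unique _ _ (is_series_single (fun _ => 0) (fun _ => eq_refl))). Qed.

Lemma Series_linear_recurrence (v w : nat -> R) (c W : R) :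
  c <> 1 -> v 0%nat = 0 -> (forall n, v (S n) = c * v n + w n) ->
  ex_series v -> is_series w W -> Series v = W / (1 - c).
Proof.
  intros Hc Hv0 Hrec Hv Hw.
  assert (Hfix : Series v = c * Series v + W).
  { rewrite (Series_incr_1 v Hv) at 1. rewrite Hv0, Rplus_0_l, (Series_ext _ _ Hrec).
    rewrite Series_plus, Series_scal_l, (is_series_unique _ _ Hw); [reflexivity | | eexists; exact Hw].
    destruct Hv as [l Hl]. exists (c * l). apply (is_series_scal_l c v), Hl. }
  apply (Rmult_eq_reg_r (1 - c)); [|lra]. unfold Rdiv. rewrite Rmult_assoc, Rinv_l by lra. lra.
Qed.

Lemma ex_series_geom_le (a : nat -> R) (C q : R) :
  0 <= q < 1 -> (forall n, Rabs (a n) <= C * q ^ n) ->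
  ex_series (fun n => Rabs (a n)).
Proof.
  intros Hq Ha. apply (ex_series_le (fun n => Rabs (a n)) (fun n => C * q ^ n)).
  - intro n. rewrite Rabs_Rabsolu. apply Ha.
  - exists (C * / (1 - q)). apply (is_series_scal_l C (fun n => q ^ n)), is_series_geom.
    rewrite Rabs_pos_eq; lra.
Qed.

Lemma Rabs_Series_geom_le (a : nat -> R) (C q : R) :
  0 <= q < 1 -> (forall n, Rabs (a n) <= C * q ^ n) ->
  Rabs (Series a) <= C / (1 - q).
Proof.
  intros Hq Ha.
  assert (Hg : is_series (fun n => C * q ^ n) (C * / (1 - q))).
  { apply (is_series_scal_l C (fun n => q ^ n)), is_series_geom. rewrite Rabs_pos_eq; lra. }
  eapply Rle_trans; [apply Series_Rabs, (ex_series_geom_le a C q); auto|].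
  unfold Rdiv. rewrite <- (is_series_unique _ _ Hg). apply Series_le; [|eexists; eauto].
  intro n. split; [apply Rabs_pos | apply Ha].
Qed.

Lemma infinite_sum_geom_rate (a : nat -> R) (l K q : R) :
  0 <= q < 1 -> (forall N, Rabs (sum_f_R0 a N - l) <= K * q ^ N) ->
  infinite_sum a l.
Proof.
  intros Hq Ha eps Heps.
  assert (HK : 0 < Rabs K + 1) by (pose proof (Rabs_pos K); lra).
  destruct (pow_lt_1_zero q ltac:(rewrite Rabs_pos_eq; lra) (eps / (Rabs K + 1)))
    as [N HN]; [apply Rdiv_lt_0_compat; lra|].
  exists N. intros n Hn. specialize (HN n Hn).
  rewrite Rabs_pos_eq in HN by (apply pow_le; lra).
  apply (Rmult_lt_compat_l (Rabs K + 1)) in HN; [|exact HK].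
  replace ((Rabs K + 1) * (eps / (Rabs K + 1))) with eps in HN by (field; lra).
  assert (K * q ^ n <= (Rabs K + 1) * q ^ n).
  { apply Rmult_le_compat_r; [apply pow_le; lra|]. pose proof (Rle_abs K); lra. }
  unfold R_dist. specialize (Ha n). lra.
Qed.

Lemma Rabs_div_bounds (x r : R) : 0 < r -> Rabs x < r -> 0 <= Rabs x / r < 1.
Proof.
  intros Hr Hx. split.
  - apply Rdiv_le_0_compat; [apply Rabs_pos | exact Hr].
  - apply (Rdiv_lt_1 _ _ Hr), Hx.
Qed.

Lemma Rabs_coef_pow_le (a : nat -> R) (M r x : R) (k : nat) :
  0 < r -> Rabs (a k) <= M / r ^ k -> Rabs (a k * x ^ k) <= M * (Rabs x / r) ^ k.
Proof.
  intros Hr Ha. rewrite Rabs_mult, <- RPow_abs.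
  replace (M * (Rabs x / r) ^ k) with (M / r ^ k * Rabs x ^ k)
    by (unfold Rdiv; rewrite Rpow_mult_distr, pow_inv; ring).
  apply Rmult_le_compat_r; [apply pow_le, Rabs_pos | exact Ha].
Qed.

Lemma ex_pseries_coef_le (a : nat -> R) (M r x : R) :
  0 < r -> Rabs x < r -> (forall k, Rabs (a k) <= M / r ^ k) -> ex_pseries a x.
Proof.
  intros Hr Hx Ha. apply ex_pseries_R, ex_series_Rabs.
  apply (ex_series_geom_le _ M (Rabs x / r)).
  - apply Rabs_div_bounds; assumption.
  - intro k. apply Rabs_coef_pow_le; auto.
Qed.

Lemma Rabs_PSeries_coef_le (a : nat -> R) (M r x : R) :
  0 < r -> Rabs x < r -> (forall k, Rabs (a k) <= M / r ^ k) ->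
  Rabs (PSeries a x) <= M / (1 - Rabs x / r).
Proof.
  intros Hr Hx Ha. apply Rabs_Series_geom_le.
  - apply Rabs_div_bounds; assumption.
  - intro k. apply Rabs_coef_pow_le; auto.
Qed.

Lemma ex_pseries_sum_f_R0 (U : nat -> nat -> R) (x : R) (N : nat) :
  (forall n, ex_pseries (U n) x) ->
  ex_pseries (fun k => sum_f_R0 (fun n => U n k) N) x.
Proof.
  intro HU. induction N as [|N IH]; [apply HU|].
  apply (ex_pseries_ext (PS_plus (fun k => sum_f_R0 (fun n => U n k) N) (U (S N)))).
  - reflexivity.
  - apply ex_pseries_plus; auto.
Qed.

Lemma PSeries_sum_f_R0 (U : nat -> nat -> R) (x : R) (N : nat) :
  (forall n, ex_pseries (U n) x) ->
  sum_f_R0 (fun n => PSeries (U n) x) N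
  = PSeries (fun k => sum_f_R0 (fun n => U n k) N) x.
Proof.
  intro HU. induction N as [|N IH]; [reflexivity|].
  simpl. rewrite IH, <- PSeries_plus; auto using ex_pseries_sum_f_R0.
Qed.

Lemma infinite_sum_PSeries (U : nat -> nat -> R) (C q r x : R) :
  0 <= q < 1 -> 0 < r -> Rabs x < r ->
  (forall n k, Rabs (U n k) <= C * q ^ n / r ^ k) ->
  infinite_sum (fun n => PSeries (U n) x)
    (PSeries (fun k => Series (fun n => U n k)) x).
Proof.
  intros Hq Hr Hx HU.
  assert (Hrk : forall k, 0 < r ^ k) by (intro; apply pow_lt, Hr).
  assert (HUk : forall k n, Rabs (U n k) <= C / r ^ k * q ^ n).
  { intros k n. eapply Rle_trans; [apply HU|]. right. unfold Rdiv. ring. }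
  assert (Htail : forall N k,
    Rabs (Series (fun n => U n k) - sum_f_R0 (fun n => U n k) N)
    <= C * q ^ S N / (1 - q) / r ^ k).
  { intros N k.
    rewrite (Series_incr_n _ (S N)) by
      (lia || apply ex_series_Rabs, (ex_series_geom_le _ _ _ Hq (HUk k))).
    simpl pred. unfold Rminus. rewrite Rplus_comm, <- Rplus_assoc, Rplus_opp_l, Rplus_0_l.
    eapply Rle_trans; [apply (Rabs_Series_geom_le _ (C / r ^ k * q ^ S N) q Hq)|].
    - intro n. eapply Rle_trans; [apply HUk|]. rewrite pow_add. right; ring.
    - right. field. specialize (Hrk k). lra. }
  assert (Hex : forall n, ex_pseries (U n) x).
  { intro n. apply (ex_pseries_coef_le _ (C * q ^ n) r); auto. }
  apply (infinite_sum_geom_rate _ _ (C * q / (1 - q) / (1 - Rabs x / r)) q Hq).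
  intro N. rewrite PSeries_sum_f_R0 by exact Hex.
  rewrite Rabs_minus_sym, <- PSeries_minus.
  - eapply Rle_trans; [apply (Rabs_PSeries_coef_le _ (C * q ^ S N / (1 - q)) r); auto|].
    + intro k. apply Htail.
    + right. simpl. field. split; [|lra].
      pose proof (Rabs_div_bounds x r Hr Hx). lra.
  - apply (ex_pseries_coef_le _ (C / (1 - q)) r); auto. intro k.
    replace (C / (1 - q) / r ^ k) with (C / r ^ k / (1 - q)) by (field; specialize (Hrk k); lra).
    apply (Rabs_Series_geom_le _ _ _ Hq (HUk k)).
  - apply ex_pseries_sum_f_R0, Hex.
Qed.

Lemma PSeries_taylor2_remainder (a : nat -> R) (M r x : R) :
  0 < r -> Rabs x <= r / 2 -> (forall k, Rabs (a k) <= M / r ^ k) ->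
  Rabs (PSeries a x - (a 0%nat + a 1%nat * x + a 2%nat * x ^ 2))
  <= 2 * M / r ^ 3 * Rabs x ^ 3.
Proof.
  intros Hr Hx Ha.
  assert (Hxr : Rabs x < r) by lra.
  assert (Hr3 : 0 < r ^ 3) by (apply pow_lt, Hr).
  assert (Hdecr : forall k, Rabs (PS_decr_n a 3 k) <= M / r ^ 3 / r ^ k).
  { intro k. unfold PS_decr_n. replace (M / r ^ 3 / r ^ k) with (M / r ^ (3 + k))
      by (rewrite pow_add; field; repeat split; try apply pow_nonzero; lra).
    apply Ha. }
  rewrite (PSeries_decr_n a 2) by (apply (ex_pseries_coef_le _ M r); assumption).
  simpl sum_f_R0.
  match goal with |- Rabs ?e <= _ =>
    replace e with (x ^ 3 * PSeries (PS_decr_n a 3) x) by ring end.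
  rewrite Rabs_mult, <- RPow_abs, Rmult_comm.
  apply Rmult_le_compat_r; [apply pow_le, Rabs_pos|].
  eapply Rle_trans; [apply (Rabs_PSeries_coef_le _ (M / r ^ 3) r); auto|].
  assert (HM : 0 <= M / r ^ 3).
  { pose proof (Ha 0%nat) as H0. pose proof (Rabs_pos (a 0%nat)). simpl in H0.
    apply Rdiv_le_0_compat; lra. }
  assert (Rabs x / r <= / 2).
  { apply (Rmult_le_reg_r r); [exact Hr|]. unfold Rdiv. rewrite Rmult_assoc, Rinv_l; lra. }
  apply (Rmult_le_reg_r (1 - Rabs x / r)); [lra|].
  unfold Rdiv at 1. rewrite Rmult_assoc, Rinv_l, Rmult_1_r by lra.
  replace (2 * M / r ^ 3 * (1 - Rabs x / r)) with (M / r ^ 3 * (2 * (1 - Rabs x / r)))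
    by (field; lra).
  rewrite <- (Rmult_1_r (M / r ^ 3)) at 1.
  apply Rmult_le_compat_l; lra.
Qed.

Lemma little_o_sq_of_cubic_bound (g : R -> R) (K d : R) :
  0 < d -> (forall x, Rabs x <= d -> Rabs (g x) <= K * Rabs x ^ 3) ->
  forall eps, 0 < eps -> exists delta, 0 < delta /\
    forall x, 0 < Rabs x < delta -> Rabs (g x) <= eps * x ^ 2.
Proof.
  intros Hd Hg eps Heps.
  assert (HK : 0 < Rabs K + 1) by (pose proof (Rabs_pos K); lra).
  exists (Rmin d (eps / (Rabs K + 1))). split.
  { apply Rmin_pos; [exact Hd | apply Rdiv_lt_0_compat; assumption]. }
  intros x [Hx0 Hx].
  pose proof (Rmin_l d (eps / (Rabs K + 1))) as Hmin_d.
  pose proof (Rmin_r d (eps / (Rabs K + 1))) as Hmin_eps.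
  eapply Rle_trans; [apply Hg; lra|].
  rewrite <- (pow2_abs x).
  replace (K * Rabs x ^ 3) with (K * Rabs x * Rabs x ^ 2) by ring.
  apply Rmult_le_compat_r; [apply pow2_ge_0|].
  assert (Rabs x * (Rabs K + 1) <= eps).
  { apply (Rmult_le_reg_r (/ (Rabs K + 1))); [apply Rinv_0_lt_compat, HK|].
    rewrite Rmult_assoc, Rinv_r, Rmult_1_r by lra. unfold Rdiv in Hmin_eps. lra. }
  pose proof (Rle_abs K). nra.
Qed.

(** * A submultiplicative norm on power series *)

Lemma Series_ge_0 (a : nat -> R) :
  (forall n, 0 <= a n) -> ex_series a -> 0 <= Series a.
Proof.
  intros Ha Hex.
  rewrite <- Series_zero.
  apply Series_le; [intro n; split; [lra | apply Ha] | exact Hex].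
Qed.

Lemma Series_ge_term (a : nat -> R) (k : nat) :
  (forall n, 0 <= a n) -> ex_series a -> a k <= Series a.
Proof.
  intros Ha Hex. rewrite (Series_incr_n a (S k)) by (lia || exact Hex). simpl pred.
  assert (Htail : 0 <= Series (fun n => a (S k + n)%nat)).
  { apply Series_ge_0; [intro; apply Ha | apply (ex_series_incr_n a (S k)), Hex]. }
  destruct k as [|k]; simpl sum_f_R0; [lra|].
  pose proof (cond_pos_sum a k Ha). lra.
Qed.

Lemma CV_disk_le_radius (a : nat -> R) (r : R) :
  CV_disk a r -> Rbar_le r (CV_radius a).
Proof. intro Ha. exact (proj1 (Lub_Rbar_correct (CV_disk a)) r Ha). Qed.

Definition PS_one (k : nat) : R := match k with O => 1 | S _ => 0 end.

Definition PS_X : nat -> R := PS_incr_1 PS_one.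

Fixpoint PS_pow (a : nat -> R) (m : nat) : nat -> R :=
  match m with O => PS_one | S m' => PS_mult a (PS_pow a m') end.

Lemma PSeries_one (x : R) : PSeries PS_one x = 1.
Proof.
  unfold PSeries. rewrite (is_series_unique _ (PS_one 0 * x ^ 0)); [simpl; ring|].
  apply is_series_single. intro k. simpl. ring.
Qed.

Lemma PSeries_X (x : R) : PSeries PS_X x = x.
Proof. unfold PS_X. rewrite PSeries_incr_1, PSeries_one. ring. Qed.

Lemma PS_pow_coef_01 (a : nat -> R) (m : nat) :
  a 0%nat = 1 -> PS_pow a m 0%nat = 1 /\ PS_pow a m 1%nat = INR m * a 1%nat.
Proof.
  intro Ha0. induction m as [|m [IH0 IH1]]; simpl.
  - split; ring.
  - unfold PS_mult. simpl. rewrite IH0, IH1, Ha0.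
    split; [ring|]. destruct m; simpl; ring.
Qed.

Definition pnorm_le (r : R) (a : nat -> R) (M : R) : Prop :=
  CV_disk a r /\ Series (fun k => Rabs (a k * r ^ k)) <= M.

Lemma pnorm_le_weaken (r M M' : R) (a : nat -> R) :
  pnorm_le r a M -> M <= M' -> pnorm_le r a M'.
Proof. intros [Ha HM] HMM'. split; [exact Ha | lra]. Qed.

Lemma pnorm_le_coef (r M : R) (a : nat -> R) (k : nat) :
  0 < r -> pnorm_le r a M -> Rabs (a k) <= M / r ^ k.
Proof.
  intros Hr [Ha HM].
  assert (Hrk : 0 < r ^ k) by (apply pow_lt, Hr).
  assert (Hk : Rabs (a k * r ^ k) <= M).
  { eapply Rle_trans; [|exact HM].
    apply (Series_ge_term (fun k => Rabs (a k * r ^ k))); [intro; apply Rabs_pos | exact Ha]. }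
  rewrite Rabs_mult, (Rabs_pos_eq (r ^ k)) in Hk by lra.
  apply (Rmult_le_reg_r (r ^ k)); [exact Hrk|].
  unfold Rdiv. rewrite Rmult_assoc, Rinv_l; lra.
Qed.

Section WeightedNorm.

Variable r : R.

Lemma pnorm_le_plus (a b : nat -> R) (M N : R) :
  pnorm_le r a M -> pnorm_le r b N -> pnorm_le r (PS_plus a b) (M + N).
Proof.
  intros [Ha HM] [Hb HN].
  set (wa := fun k => Rabs (a k * r ^ k)). set (wb := fun k => Rabs (b k * r ^ k)).
  assert (Hle : forall k, 0 <= Rabs (PS_plus a b k * r ^ k) <= wa k + wb k).
  { intro k. split; [apply Rabs_pos|]. change (PS_plus a b k) with (a k + b k).
    rewrite Rmult_plus_distr_r. apply Rabs_triang. }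
  assert (Hsum : is_series (fun k => wa k + wb k) (Series wa + Series wb)).
  { apply (is_series_plus wa wb); apply Series_correct; assumption. }
  split.
  - apply (ex_series_le (fun k => Rabs (PS_plus a b k * r ^ k)) (fun k => wa k + wb k)).
    + intro k. rewrite Rabs_Rabsolu. apply Hle.
    + eexists; exact Hsum.
  - eapply Rle_trans; [apply Series_le; [exact Hle | eexists; exact Hsum]|].
    rewrite (is_series_unique _ _ Hsum). unfold wa, wb. lra.
Qed.

Lemma pnorm_le_scal (c : R) (a : nat -> R) (M : R) :
  pnorm_le r a M -> pnorm_le r (PS_scal c a) (Rabs c * M).
Proof.
  intros [Ha HM].
  assert (Hw : forall k, Rabs (PS_scal c a k * r ^ k) = Rabs c * Rabs (a k * r ^ k)).
  { intro k. change (PS_scal c a k) with (c * a k). rewrite <- Rabs_mult. f_equal. ring. }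
  assert (Hsum : is_series (fun k => Rabs (PS_scal c a k * r ^ k))
                   (Rabs c * Series (fun k => Rabs (a k * r ^ k)))).
  { eapply is_series_ext; [intro k; symmetry; apply Hw|].
    apply (is_series_scal_l (Rabs c) (fun k => Rabs (a k * r ^ k))), Series_correct, Ha. }
  split; [eexists; exact Hsum|].
  rewrite (is_series_unique _ _ Hsum). apply Rmult_le_compat_l; [apply Rabs_pos | exact HM].
Qed.

Lemma PS_mult_scale (a b : nat -> R) (n : nat) :
  PS_mult a b n * r ^ n = PS_mult (fun k => a k * r ^ k) (fun k => b k * r ^ k) n.
Proof.
  unfold PS_mult. rewrite Rmult_comm, scal_sum. apply sum_eq. intros i Hi.
  replace (r ^ n) with (r ^ i * r ^ (n - i)) by (rewrite <- pow_add; f_equal; lia).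
  ring.
Qed.

Lemma pnorm_le_mult (a b : nat -> R) (M N : R) :
  pnorm_le r a M -> pnorm_le r b N -> pnorm_le r (PS_mult a b) (M * N).
Proof.
  intros [Ha HM] [Hb HN].
  set (wa := fun k => Rabs (a k * r ^ k)). set (wb := fun k => Rabs (b k * r ^ k)).
  assert (Hwa : 0 <= Series wa) by (apply Series_ge_0; [intro; apply Rabs_pos | exact Ha]).
  assert (Hwb : 0 <= Series wb) by (apply Series_ge_0; [intro; apply Rabs_pos | exact Hb]).
  assert (Hprod : is_series (PS_mult wa wb) (Series wa * Series wb)).
  { apply is_series_mult; [apply Series_correct, Ha | apply Series_correct, Hb | |].
    - apply (ex_series_ext wa); [intro k; symmetry; apply Rabs_Rabsolu | exact Ha].
    - apply (ex_series_ext wb); [intro k; symmetry; apply Rabs_Rabsolu | exact Hb]. }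
  assert (Hle : forall n, 0 <= Rabs (PS_mult a b n * r ^ n) <= PS_mult wa wb n).
  { intro n. split; [apply Rabs_pos|]. rewrite PS_mult_scale.
    eapply Rle_trans; [apply sum_f_R0_triangle|].
    right. apply sum_eq. intros i _. apply Rabs_mult. }
  split.
  - apply (ex_series_le (fun n => Rabs (PS_mult a b n * r ^ n)) (PS_mult wa wb)).
    + intro n. rewrite Rabs_Rabsolu. apply Hle.
    + eexists; exact Hprod.
  - eapply Rle_trans; [apply Series_le; [exact Hle | eexists; exact Hprod]|].
    rewrite (is_series_unique _ _ Hprod). apply Rmult_le_compat; assumption.
Qed.

Lemma pnorm_le_one : pnorm_le r PS_one 1.
Proof.
  assert (Hsum : is_series (fun k => Rabs (PS_one k * r ^ k)) 1).
  { replace 1 with (Rabs (PS_one 0 * r ^ 0)) by (simpl; rewrite Rmult_1_r; apply Rabs_R1).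
    apply is_series_single. intro k. simpl. rewrite Rmult_0_l. apply Rabs_R0. }
  split; [eexists; exact Hsum | rewrite (is_series_unique _ _ Hsum); lra].
Qed.

Lemma pnorm_le_incr_1 (a : nat -> R) (M : R) :
  0 <= r -> pnorm_le r a M -> pnorm_le r (PS_incr_1 a) (r * M).
Proof.
  intros hr [Ha HM].
  assert (Hsum : is_series (fun k => Rabs (PS_incr_1 a k * r ^ k))
                   (r * Series (fun k => Rabs (a k * r ^ k)))).
  { set (w := fun k => Rabs (a k * r ^ k)).
    assert (Hshift : is_series (fun k => Rabs (PS_incr_1 a (S k) * r ^ S k)) (r * Series w)).
    { eapply is_series_ext; [|apply (is_series_scal_l r w), Series_correct, Ha].
      intro k. change (PS_incr_1 a (S k)) with (a k). unfold w. simpl.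
      rewrite <- (Rabs_pos_eq r hr) at 1. rewrite <- Rabs_mult. f_equal. ring. }
    apply is_series_decr_1.
    match goal with |- is_series _ ?l => replace l with (r * Series w); [exact Hshift|] end.
    change (PS_incr_1 a 0) with 0. rewrite Rmult_0_l, Rabs_R0.
    unfold plus, opp; simpl. ring. }
  split; [eexists; exact Hsum|].
  rewrite (is_series_unique _ _ Hsum). apply Rmult_le_compat_l; assumption.
Qed.

Lemma pnorm_le_pow (a : nat -> R) (M : R) (m : nat) :
  pnorm_le r a M -> pnorm_le r (PS_pow a m) (M ^ m).
Proof.
  intro Ha. induction m as [|m IH]; [apply pnorm_le_one | apply pnorm_le_mult; assumption].
Qed.

Lemma pnorm_le_radius (a : nat -> R) (M x : R) :
  pnorm_le r a M -> Rabs x < r -> Rbar_lt (Rabs x) (CV_radius a).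
Proof.
  intros [Ha _] Hx. eapply Rbar_lt_le_trans; [|apply CV_disk_le_radius, Ha]. exact Hx.
Qed.

Lemma Rabs_PSeries_le (a : nat -> R) (M x : R) :
  pnorm_le r a M -> Rabs x <= r -> Rabs (PSeries a x) <= M.
Proof.
  intros [Ha HM] Hx.
  assert (hr : 0 <= r) by (pose proof (Rabs_pos x); lra).
  assert (Hle : forall k, 0 <= Rabs (a k * x ^ k) <= Rabs (a k * r ^ k)).
  { intro k. split; [apply Rabs_pos|]. rewrite !Rabs_mult, <- !RPow_abs, (Rabs_pos_eq r hr).
    apply Rmult_le_compat_l; [apply Rabs_pos|]. apply pow_incr. split; [apply Rabs_pos | exact Hx]. }
  assert (Hex : ex_series (fun k => Rabs (a k * x ^ k))).
  { apply (ex_series_le (fun k => Rabs (a k * x ^ k)) (fun k => Rabs (a k * r ^ k))); [|exact Ha].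
    intro k. rewrite Rabs_Rabsolu. apply Hle. }
  eapply Rle_trans; [apply Series_Rabs, Hex|].
  eapply Rle_trans; [apply Series_le; [exact Hle | exact Ha] | exact HM].
Qed.

Lemma PSeries_pow (a : nat -> R) (M x : R) (m : nat) :
  pnorm_le r a M -> Rabs x < r -> PSeries (PS_pow a m) x = PSeries a x ^ m.
Proof.
  intros Ha Hx. induction m as [|m IH]; simpl; [apply PSeries_one|].
  rewrite PSeries_mult, IH; [reflexivity | |];
    eapply pnorm_le_radius; eauto using pnorm_le_pow.
Qed.

End WeightedNorm.

(** * Power series expansion of the scenario *)

Section Scenario.

Variables (S : R) (zeta : nat) (phi : R).

(* Power series coefficients of [u_n] and [s_n]: [u_0 = s_0 = X] and
   [u_{n+1} = phi (1 + s_n / S)^(1+zeta) u_n], i.e. the first branch of the max. *)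
Fixpoint scenario_coefs (n : nat) : (nat -> R) * (nat -> R) :=
  match n with
  | O => (PS_X, PS_X)
  | Datatypes.S m =>
      let p := scenario_coefs m in
      let u := PS_scal phi
                 (PS_mult (PS_pow (PS_plus PS_one (PS_scal (/ S) (snd p))) (1 + zeta)) (fst p)) in
      (u, PS_plus (snd p) u)
  end.

Definition u_coef (n : nat) : nat -> R := fst (scenario_coefs n).
Definition s_coef (n : nat) : nat -> R := snd (scenario_coefs n).

Definition impact_base (n : nat) : nat -> R := PS_plus PS_one (PS_scal (/ S) (s_coef n)).

Definition impact_factor (n : nat) : nat -> R := PS_pow (impact_base n) (1 + zeta).

Lemma u_coef_succ (n : nat) :
  u_coef (Datatypes.S n) = PS_scal phi (PS_mult (impact_factor n) (u_coef n)).
Proof. reflexivity. Qed.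

Lemma s_coef_succ (n : nat) :
  s_coef (Datatypes.S n) = PS_plus (s_coef n) (u_coef (Datatypes.S n)).
Proof. reflexivity. Qed.

Lemma scenario_coefs_01 (n : nat) :
  u_coef n 0%nat = 0 /\ s_coef n 0%nat = 0 /\
  u_coef n 1%nat = phi ^ n /\ s_coef n 1%nat = sum_f_R0 (fun j => phi ^ j) n.
Proof.
  induction n as [|n (U0 & S0 & U1 & S1)]; [repeat split; simpl; ring|].
  destruct (PS_pow_coef_01 (impact_base n) (1 + zeta))
    as [P0 P1]; [change (1 + / S * s_coef n 0%nat = 1); rewrite S0; ring|].
  fold (impact_factor n) in P0, P1.
  assert (E0 : u_coef (Datatypes.S n) 0%nat = 0).
  { rewrite u_coef_succ. change (phi * (impact_factor n 0%nat * u_coef n 0%nat) = 0).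
    rewrite U0. ring. }
  assert (E1 : u_coef (Datatypes.S n) 1%nat = phi ^ Datatypes.S n).
  { rewrite u_coef_succ.
    change (phi * (impact_factor n 0%nat * u_coef n 1%nat + impact_factor n 1%nat * u_coef n 0%nat)
            = phi ^ Datatypes.S n).
    rewrite P0, U0, U1. simpl. ring. }
  rewrite s_coef_succ. repeat split; try assumption.
  - change (s_coef n 0%nat + u_coef (Datatypes.S n) 0%nat = 0). rewrite S0, E0. ring.
  - change (s_coef n 1%nat + u_coef (Datatypes.S n) 1%nat = sum_f_R0 (fun j => phi ^ j) (Datatypes.S n)).
    rewrite S1, E1. reflexivity.
Qed.

Lemma u_coef_succ_2 (n : nat) :
  u_coef (Datatypes.S n) 2%nat
  = phi * u_coef n 2%nat + phi * INR (1 + zeta) / S * s_coef n 1%nat * phi ^ n.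
Proof.
  destruct (scenario_coefs_01 n) as (U0 & S0 & U1 & _).
  destruct (PS_pow_coef_01 (impact_base n) (1 + zeta))
    as [P0 P1]; [change (1 + / S * s_coef n 0%nat = 1); rewrite S0; ring|].
  fold (impact_factor n) in P0, P1.
  change (impact_base n 1%nat) with (0 + / S * s_coef n 1%nat) in P1.
  rewrite u_coef_succ.
  change (phi * (impact_factor n 0%nat * u_coef n 2%nat + impact_factor n 1%nat * u_coef n 1%nat
                 + impact_factor n 2%nat * u_coef n 0%nat)
          = phi * u_coef n 2%nat + phi * INR (1 + zeta) / S * s_coef n 1%nat * phi ^ n).
  rewrite P0, P1, U0, U1. unfold Rdiv. ring.
Qed.

Lemma u_sc_succ (n : nat) (x : R) :
  u_sc S zeta phi (Datatypes.S n) x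
  = Rmax (phi * (1 + s_sc S zeta phi n x / S) ^ (1 + zeta) * u_sc S zeta phi n x)
         (- s_sc S zeta phi n x - S).
Proof. reflexivity. Qed.

Lemma s_sc_succ (n : nat) (x : R) :
  s_sc S zeta phi (Datatypes.S n) x = s_sc S zeta phi n x + u_sc S zeta phi (Datatypes.S n) x.
Proof. reflexivity. Qed.

Definition scenario_pcoef (k : nat) : R := Series (fun n => u_coef n k).

Section Majorant.

Hypothesis hS : 0 < S.
Variables r q d : R.
Hypothesis hr : 0 < r.
Hypothesis hq : 0 <= q < 1.
Hypothesis hd : d < 1.
Hypothesis hphi_q : Rabs phi * (1 + d) ^ (1 + zeta) <= q.
Hypothesis hrd : r / (1 - q) <= S * d.

Lemma geom_partial_le (n : nat) : r * (1 - q ^ n) / (1 - q) <= S * d.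
Proof.
  eapply Rle_trans; [|exact hrd]. unfold Rdiv.
  apply Rmult_le_compat_r; [apply Rlt_le, Rinv_0_lt_compat; lra|].
  pose proof (pow_le q n (proj1 hq)). nra.
Qed.

Lemma impact_base_norm (n : nat) :
  pnorm_le r (s_coef n) (r * (1 - q ^ Datatypes.S n) / (1 - q)) ->
  pnorm_le r (impact_base n) (1 + d).
Proof.
  intro Hs.
  apply (pnorm_le_weaken r (1 + Rabs (/ S) * (r * (1 - q ^ Datatypes.S n) / (1 - q)))).
  - apply pnorm_le_plus; [apply pnorm_le_one | apply pnorm_le_scal, Hs].
  - rewrite Rabs_pos_eq by (apply Rlt_le, Rinv_0_lt_compat, hS).
    assert (/ S * (r * (1 - q ^ Datatypes.S n) / (1 - q)) <= / S * (S * d)).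
    { apply Rmult_le_compat_l; [apply Rlt_le, Rinv_0_lt_compat, hS | apply geom_partial_le]. }
    replace (/ S * (S * d)) with d in * by (field; lra). lra.
Qed.

Lemma scenario_coef_norms (n : nat) :
  pnorm_le r (u_coef n) (r * q ^ n) /\
  pnorm_le r (s_coef n) (r * (1 - q ^ Datatypes.S n) / (1 - q)).
Proof.
  assert (HX : pnorm_le r PS_X (r * 1)) by (apply pnorm_le_incr_1; [lra | apply pnorm_le_one]).
  induction n as [|n [Hu Hs]].
  - split; (eapply pnorm_le_weaken; [exact HX|]); right; simpl; field; lra.
  - assert (Hu' : pnorm_le r (u_coef (Datatypes.S n)) (r * q ^ Datatypes.S n)).
    { rewrite u_coef_succ.
      apply (pnorm_le_weaken r (Rabs phi * ((1 + d) ^ (1 + zeta) * (r * q ^ n)))).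
      - apply pnorm_le_scal, pnorm_le_mult; [apply pnorm_le_pow, impact_base_norm, Hs | exact Hu].
      - assert (0 <= r * q ^ n) by (apply Rmult_le_pos; [lra | apply pow_le, hq]).
        replace (r * q ^ Datatypes.S n) with (q * (r * q ^ n)) by (simpl; ring).
        rewrite <- Rmult_assoc. apply Rmult_le_compat_r; assumption. }
    split; [exact Hu'|].
    rewrite s_coef_succ.
    apply (pnorm_le_weaken r (r * (1 - q ^ Datatypes.S n) / (1 - q) + r * q ^ Datatypes.S n)).
    + apply pnorm_le_plus; [exact Hs | exact Hu'].
    + right. simpl. field. lra.
Qed.

Lemma Rabs_PSeries_s_coef_le (n : nat) (x : R) :
  Rabs x < r -> Rabs (PSeries (s_coef n) x) <= S * d.
Proof.
  intro Hx. eapply Rle_trans; [|apply (geom_partial_le (Datatypes.S n))].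
  apply (Rabs_PSeries_le r); [apply scenario_coef_norms | lra].
Qed.

(* On the disk the max in the recursion always selects its first branch, since [|s_n| <= S d < S]. *)
Lemma scenario_eval (n : nat) (x : R) :
  Rabs x < r ->
  u_sc S zeta phi n x = PSeries (u_coef n) x /\ s_sc S zeta phi n x = PSeries (s_coef n) x.
Proof.
  intro Hx.
  assert (HSd : S * d < S) by nra.
  induction n as [|n [Hu Hs]].
  - pose proof (geom_partial_le 1) as Hr1.
    replace (r * (1 - q ^ 1) / (1 - q)) with r in Hr1 by (simpl; field; lra).
    change (u_coef 0) with PS_X. change (s_coef 0) with PS_X. rewrite PSeries_X.
    apply Rabs_def2 in Hx. unfold u_sc, s_sc. simpl.
    rewrite Rmax_left by lra. split; reflexivity.
  - destruct (scenario_coef_norms n) as [HU HS].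
    pose proof (impact_base_norm n HS) as HB.
    assert (Hrad : forall a M, pnorm_le r a M -> Rbar_lt (Rabs x) (CV_radius a))
      by (intros a M Ha; exact (pnorm_le_radius r a M x Ha Hx)).
    assert (Hu' : PSeries (u_coef (Datatypes.S n)) x
                  = phi * (1 + s_sc S zeta phi n x / S) ^ (1 + zeta) * u_sc S zeta phi n x).
    { rewrite u_coef_succ, PSeries_scal, PSeries_mult;
        [| eapply Hrad, pnorm_le_pow, HB | eapply Hrad, HU].
      unfold impact_factor. rewrite (PSeries_pow r _ (1 + d)) by assumption.
      unfold impact_base. rewrite PSeries_plus, PSeries_scal, PSeries_one, <- Hu, <- Hs;
        [| apply CV_radius_inside; eapply Hrad, pnorm_le_one
         | apply CV_radius_inside; eapply Hrad, pnorm_le_scal, HS].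
      replace (s_sc S zeta phi n x / S) with (/ S * s_sc S zeta phi n x) by (unfold Rdiv; ring).
      ring. }
    assert (Hs' : PSeries (s_coef (Datatypes.S n)) x
                  = s_sc S zeta phi n x + PSeries (u_coef (Datatypes.S n)) x).
    { rewrite s_coef_succ, PSeries_plus, Hs; [reflexivity | |];
        apply CV_radius_inside; eapply Hrad; [exact HS | apply scenario_coef_norms]. }
    pose proof (Rabs_PSeries_s_coef_le (Datatypes.S n) x Hx) as Hbound.
    apply Rabs_le_between in Hbound.
    rewrite s_sc_succ, u_sc_succ, Rmax_left, <- Hu'; [split; [reflexivity | symmetry; exact Hs'] |].
    rewrite <- Hu'. lra.
Qed.

Lemma scenario_regular (x : R) : Rabs x < r -> regular S zeta phi x.
Proof.
  intros Hx n Hn.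
  pose proof (Rabs_PSeries_s_coef_le n x Hx) as Hbound.
  rewrite <- (proj2 (scenario_eval n x Hx)), Hn, Rabs_Ropp, Rabs_pos_eq in Hbound by lra.
  nra.
Qed.

Lemma u_coef_le (n k : nat) : Rabs (u_coef n k) <= r * q ^ n / r ^ k.
Proof. apply pnorm_le_coef; [exact hr | apply scenario_coef_norms]. Qed.

Lemma scenario_pcoef_le (k : nat) : Rabs (scenario_pcoef k) <= r / (1 - q) / r ^ k.
Proof.
  replace (r / (1 - q) / r ^ k) with (r / r ^ k / (1 - q))
    by (field; split; [lra | apply pow_nonzero; lra]).
  apply Rabs_Series_geom_le; [exact hq|].
  intro n. eapply Rle_trans; [apply u_coef_le|]. right. unfold Rdiv. ring.
Qed.

Lemma scenario_infinite_sum (x : R) :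
  Rabs x < r -> infinite_sum (fun n => u_sc S zeta phi n x) (PSeries scenario_pcoef x).
Proof.
  intro Hx. apply is_series_Reals.
  apply (is_series_ext (fun n => PSeries (u_coef n) x));
    [intro n; symmetry; apply scenario_eval, Hx|].
  apply is_series_Reals, (infinite_sum_PSeries u_coef r q r x hq hr Hx u_coef_le).
Qed.

Lemma scenario_Pser (x : R) :
  Rabs x < r -> Pser scenario_pcoef x (PSeries scenario_pcoef x).
Proof.
  intro Hx. apply is_pseries_Reals, PSeries_correct.
  apply (ex_pseries_coef_le _ (r / (1 - q)) r x hr Hx scenario_pcoef_le).
Qed.

Lemma Rabs_phi_lt_1 : Rabs phi < 1.
Proof.
  assert (Hd0 : 0 < d).
  { assert (0 < r / (1 - q)) by (apply Rdiv_lt_0_compat; lra). nra. }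
  assert (1 <= (1 + d) ^ (1 + zeta)) by (apply pow_R1_Rle; lra).
  pose proof (Rabs_pos phi). nra.
Qed.

Lemma scenario_pcoef_012 :
  scenario_pcoef 0%nat = 0 /\ scenario_pcoef 1%nat = / (1 - phi) /\
  scenario_pcoef 2%nat = 1 / S * ((1 + INR zeta) * phi / ((1 - phi) ^ 3 * (1 + phi))).
Proof.
  pose proof Rabs_phi_lt_1 as Hphi. apply Rabs_def2 in Hphi.
  assert (Hex : forall k, ex_series (fun n => u_coef n k)).
  { intro k. apply ex_series_Rabs, (ex_series_geom_le _ (r / r ^ k) q hq).
    intro n. eapply Rle_trans; [apply u_coef_le|]. right. unfold Rdiv. ring. }
  unfold scenario_pcoef. repeat split.
  - rewrite <- Series_zero. apply Series_ext. intro n. apply scenario_coefs_01.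
  - rewrite <- (Series_geom phi) by (apply Rabs_def1; lra).
    apply Series_ext. intro n. apply scenario_coefs_01.
  - set (kappa := INR (1 + zeta) / S).
    (* [s_n]'s linear coefficient is [(1 - phi^(n+1)) / (1 - phi)], so the forcing term of the
       recursion for the quadratic coefficient is a combination of [phi^n] and [(phi^2)^n]. *)
    set (c1 := phi * kappa / (1 - phi)). set (c2 := - (phi ^ 2 * kappa / (1 - phi))).
    assert (Hforce : is_series (fun n => phi * INR (1 + zeta) / S * s_coef n 1%nat * phi ^ n)
                       (c1 * / (1 - phi) + c2 * / (1 - phi ^ 2))).
    { apply (is_series_ext (fun n => c1 * phi ^ n + c2 * (phi ^ 2) ^ n)).
      - intro n. destruct (scenario_coefs_01 n) as (_ & _ & _ & ->).
        rewrite tech3, <- pow_mult by lra. replace (2 * n)%nat with (n + n)%nat by lia.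
        rewrite pow_add. unfold c1, c2, kappa. simpl. field. split; lra.
      - apply (is_series_plus (fun n => c1 * phi ^ n) (fun n => c2 * (phi ^ 2) ^ n));
        [apply (is_series_scal_l c1 (fun n => phi ^ n)) | apply (is_series_scal_l c2 (fun n => (phi ^ 2) ^ n))];
          apply is_series_geom, Rabs_def1; nra. }
    rewrite (Series_linear_recurrence _ _ phi _ ltac:(lra) eq_refl (u_coef_succ_2) (Hex 2%nat) Hforce).
    unfold c1, c2, kappa. rewrite plus_INR. simpl INR. field. repeat split; nra.
Qed.

End Majorant.

End Scenario.

Lemma scenario_majorant_exists (S : R) (zeta : nat) (phi : R) :
  0 < S -> (zeta = 0 \/ zeta = 1)%nat -> -1 < phi < 1 ->
  exists r q d, 0 < r /\ 0 <= q < 1 /\ d < 1 /\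
    Rabs phi * (1 + d) ^ (1 + zeta) <= q /\ r / (1 - q) <= S * d.
Proof.
  intros hS hzeta hphi.
  set (p := Rabs phi).
  assert (Hp : 0 <= p < 1) by (unfold p; split; [apply Rabs_pos | apply Rabs_def1; lra]).
  set (q := (1 + p) / 2). set (d := (1 - p) / 6).
  exists (S * d * (1 - q)), q, d.
  repeat split; unfold q, d in *; try lra.
  - apply Rmult_lt_0_compat; [apply Rmult_lt_0_compat|]; lra.
  - fold p. destruct hzeta as [-> | ->]; simpl; nra.
  - right. field. lra.
Qed.

Theorem proposition4p4 (S : R) (zeta : nat) (phi : R)
  (hS : 0 < S) (hzeta : (zeta = 0 \/ zeta = 1)%nat) (hphi : -1 < phi < 1) :
  exists (Rad : R) (a : nat -> R) (f : R -> R),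
    0 < Rad /\
    (forall x : R, -Rad < x < Rad ->
       regular S zeta phi x /\
       infinite_sum (fun n => u_sc S zeta phi n x) (f x) /\
       Pser a x (f x)) /\
    (forall eps : R, 0 < eps -> exists delta : R, 0 < delta /\
       forall x : R, 0 < Rabs x < delta ->
         Rabs (f x - (x / (1 - phi)
                      + (1 / S) * ((1 + INR zeta) * phi
                                   / ((1 - phi) ^ 3 * (1 + phi))) * x ^ 2))
         <= eps * x ^ 2).
Proof.
  destruct (scenario_majorant_exists S zeta phi hS hzeta hphi)
    as (r & q & d & hr & hq & hd & hphi_q & hrd).
  set (a := scenario_pcoef S zeta phi).
  destruct (scenario_pcoef_012 S zeta phi) with r q d as (a0 & a1 & a2); try assumption.
  exists r, a, (PSeries a). split; [exact hr | split].
  - intros x Hx. assert (Hxr : Rabs x < r) by (apply Rabs_def1; lra).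
    split; [|split].
    + apply (scenario_regular S zeta phi) with r q d; assumption.
    + apply (scenario_infinite_sum S zeta phi) with r q d; assumption.
    + apply (scenario_Pser S zeta phi) with r q d; assumption.
  - apply (little_o_sq_of_cubic_bound _ (2 * (r / (1 - q)) / r ^ 3) (r / 2)); [lra|].
    intros x Hx.
    replace (x / (1 - phi) + 1 / S * ((1 + INR zeta) * phi / ((1 - phi) ^ 3 * (1 + phi))) * x ^ 2)
      with (a 0%nat + a 1%nat * x + a 2%nat * x ^ 2)
      by (fold a in a0, a1, a2; rewrite a0, a1, a2; field; lra).
    apply PSeries_taylor2_remainder; [exact hr | exact Hx |].
    apply (scenario_pcoef_le S zeta phi) with d; assumption.
Qed.
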